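(* Let $0<q<1$ and $n\ge1$. For every $\lambda\in U(1)$ the formulas \begin{align*} \pi_\lambda(y_i)|\mathbf{k}\rangle &=q^{k_1+\ldots+k_{i-1}}\sqrt{1-q^{2k_i}}\,|\mathbf{k}-\mathbf{e}_i\rangle \qquad (1\leq i\leq n-1),\\ \pi_\lambda(y_n)|\mathbf{k}\rangle &=q^{k_1+\ldots+k_{n-1}}\sqrt{1-q^{4k_n}}\,|\mathbf{k}-\mathbf{e}_n\rangle ,\\ \pi_\lambda(y_{n+1})|\mathbf{k}\rangle &=\lambda\, q^{|\mathbf{k}|+k_n}|\mathbf{k}\rangle , \end{align*} define an irreducible bounded $*$-representation $\pi_\lambda$ of $\mathcal{A}(\Sigma^{2n+1}_q)$ on $\ell^2(\mathbb{N}^n)$. Here $\mathbf{k}=(k_1,\ldots,k_n)\in\mathbb{N}^n$ ($\mathbb{N}=\{0,1,2,\dots\}$), $|\mathbf{k}|=k_1+\dots+k_n$, $\{|\mathbf{k}\rangle\}$ is the canonical orthonormal basis of $\ell^2(\mathbb{N}^n)$, $\mathbf{e}_i$ is the $i$-th standard basis vector of $\mathbb{Z}^n$, and $|\mathbf{k}\rangle:=0$ if some component of $\mathbf{k}$ is negative.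
   Context: Let $0<q<1$, $n\ge1$. $\mathcal{A}(S^{4n-1}_q)$ is the complex unital $*$-algebra generated by $x_1,\dots,x_n,y_1,\dots,y_n$ and their adjoints subject to: $x_ix_j=q^{-1}x_jx_i$ ($i<j$); $y_iy_j=q^{-1}y_jy_i$ ($i>j$); $x_iy_j=q^{-1}y_jx_i$ ($i\ne j$); $y_ix_i=q^2x_iy_i+(q^2-1)\sum_{k=1}^{i-1}q^{i-k}x_ky_k$; $x_ix_i^*=x_i^*x_i+(1-q^2)\sum_{k=1}^{i-1}x_k^*x_k$; $y_iy_i^*=y_i^*y_i+(1-q^2)\{q^{2(n+1-i)}x_i^*x_i+\sum_{k=1}^n x_k^*x_k+\sum_{k=i+1}^n y_k^*y_k\}$; $x_iy_i^*=q^2y_i^*x_i$; $x_ix_j^*=qx_j^*x_i$ ($i\ne j$); $y_iy_j^*=qy_j^*y_i-(q^2-1)q^{2n+2-i-j}x_i^*x_j$ ($i\neq j$); $x_iy_j^*=qy_j^*x_i$ ($i<j$); $x_iy_j^*=qy_j^*x_i+(q^2-1)q^{i-j}y_i^*x_j$ ($i>j$); and $\sum_{i=1}^n(x_i^*x_i+y_i^*y_i)=1$. $\mathcal{A}(\Sigma^{2n+1}_q)$ is the quotient of $\mathcal{A}(S^{4n-1}_q)$ by the two-sided $*$-ideal generated by $x_1,\dots,x_{n-1}$; in it, $y_1,\dots,y_n$ denote the images of $y_1,\dots,y_n$ and $y_{n+1}$ denotes the image of $x_n$. In this quotient, $y_{n+1}$ is normal and the following hold (with their adjoints): $y_iy_j=q^{-1}y_jy_i$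 and $y_i^*y_j=q^{-1}y_jy_i^*$ for $i>j$, $(i,j)\neq(n+1,n)$; $y_{n+1}y_n=q^{-2}y_ny_{n+1}$, $y_{n+1}^*y_n=q^{-2}y_ny_{n+1}^*$; $[y_i,y_i^*]=(1-q^2)\sum_{k=i+1}^{n+1}y_k^*y_k$ for $i\neq n$; $[y_n,y_n^*]=(1-q^4)y_{n+1}^*y_{n+1}$; $\sum_{i=1}^{n+1}y_i^*y_i=1$. *)

From HB Require Import structures.
From mathcomp Require Import all_boot all_order all_algebra.
From mathcomp Require Import all_classical all_reals all_analysis.
From mathcomp Require Import complex.
Import Order.TTheory GRing.Theory Num.Theory.
Import numFieldNormedType.Exports.
Set Implicit Arguments.
Unset Strict Implicit.
Unset Printing Implicit Defensive.
Local Open Scope classical_set_scope.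
Local Open Scope ring_scope.

(* the paper's index i (1 <= i <= n) corresponds to the ordinal i-1.        *)

Definition idx (n : nat) := {ffun 'I_n -> nat}.
Definition vec (R : realType) (n : nat) := idx n -> R[i].
Definition op (R : realType) (n : nat) := vec R n -> vec R n.

Definition sqmod (R : realType) (z : R[i]) : R := complex.Re z ^+ 2 + complex.Im z ^+ 2.

Definition sqnorm (R : realType) (n : nat) (f : vec R n) : \bar R :=
  (\esum_(k in [set: idx n]) (sqmod (f k))%:E)%E.

Definition in_l2 (R : realType) (n : nat) (f : vec R n) : Prop :=
  (sqnorm f < +oo)%E.

(* Sum of an (absolutely summable) real family over a countable set:
   sum of the positive parts minus sum of the negative parts. *)
Definition rsum (R : realType) (T : choiceType) (u : T -> R) : R :=
  fine (\esum_(k in [set: T]) ((Num.max (u k) 0)%:E))%E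
  - fine (\esum_(k in [set: T]) ((Num.max (- u k) 0)%:E))%E.

Definition cdot (R : realType) (n : nat) (f g : vec R n) : R[i] :=
  (rsum (fun k => complex.Re (conjc (f k) * g k)) +i* rsum (fun k => complex.Im (conjc (f k) * g k)))%C.

Definition bounded_op (R : realType) (n : nat) (T : op R n) : Prop :=
  exists M : R, forall f, in_l2 f ->
    in_l2 (T f) /\ fine (sqnorm (T f)) <= M * fine (sqnorm f).

Definition adjoint_of (R : realType) (n : nat) (T S : op R n) : Prop :=
  forall f g, in_l2 f -> in_l2 g -> cdot (T f) g = cdot f (S g).

Definition opeq (R : realType) (n : nat) (T S : op R n) : Prop :=
  forall f, in_l2 f -> T f = S f.

(* Defining relations of A(S^{4n-1}_q) for images X_i = pi(x_i),             *)
(* Xs_i = pi(x_i^* ), Y_i = pi(y_i), Ys_i = pi(y_i^* ) (0-based indices).    *)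

Definition sphere_rels (R : realType) (n : nat) (q : R)
    (X Xs Y Ys : 'I_n -> op R n) : Prop :=
  let c : R[i] := (q%:C)%C in
  (forall i j : 'I_n, (i < j)%N ->
     opeq (fun f => X i (X j f)) (fun f m => c^-1 * X j (X i f) m)) /\
  (forall i j : 'I_n, (j < i)%N ->
     opeq (fun f => Y i (Y j f)) (fun f m => c^-1 * Y j (Y i f) m)) /\
  (forall i j : 'I_n, i != j ->
     opeq (fun f => X i (Y j f)) (fun f m => c^-1 * Y j (X i f) m)) /\
  (forall i : 'I_n,
     opeq (fun f => Y i (X i f))
          (fun f m => c ^+ 2 * X i (Y i f) m
             + (c ^+ 2 - 1) * \sum_(k < n | (k < i)%N) c ^+ (i - k) * X k (Y k f) m)) /\
  (forall i : 'I_n,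
     opeq (fun f => X i (Xs i f))
          (fun f m => Xs i (X i f) m
             + (1 - c ^+ 2) * \sum_(k < n | (k < i)%N) Xs k (X k f) m)) /\
  (* y_i y_i^* = y_i^* y_i + (1-q^2){q^{2(n+1-i)} x_i^* x_i + sum_k x_k^* x_k
                                     + sum_{k>i} y_k^* y_k}  (1-based i) *)
  (forall i : 'I_n,
     opeq (fun f => Y i (Ys i f))
          (fun f m => Ys i (Y i f) m
             + (1 - c ^+ 2) * (c ^+ (2 * (n - i)) * Xs i (X i f) m
                               + \sum_(k < n) Xs k (X k f) m
                               + \sum_(k < n | (i < k)%N) Ys k (Y k f) m))) /\
  (forall i : 'I_n,
     opeq (fun f => X i (Ys i f)) (fun f m => c ^+ 2 * Ys i (X i f) m)) /\
  (forall i j : 'I_n, i != j ->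
     opeq (fun f => X i (Xs j f)) (fun f m => c * Xs j (X i f) m)) /\
  (* y_i y_j^* = q y_j^* y_i - (q^2-1) q^{2n+2-i-j} x_i^* x_j  (i <> j, 1-based) *)
  (forall i j : 'I_n, i != j ->
     opeq (fun f => Y i (Ys j f))
          (fun f m => c * Ys j (Y i f) m
             - (c ^+ 2 - 1) * c ^+ (2 * n - i - j) * Xs i (X j f) m)) /\
  (forall i j : 'I_n, (i < j)%N ->
     opeq (fun f => X i (Ys j f)) (fun f m => c * Ys j (X i f) m)) /\
  (forall i j : 'I_n, (j < i)%N ->
     opeq (fun f => X i (Ys j f))
          (fun f m => c * Ys j (X i f) m
             + (c ^+ 2 - 1) * c ^+ (i - j) * Ys i (X j f) m)) /\
  opeq (fun f m => \sum_(i < n) (Xs i (X i f) m + Ys i (Y i f) m)) (fun f => f).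

(* Images of x_1,...,x_n in the quotient A(Sigma^{2n+1}_q): x_1..x_{n-1}
   are sent to 0, x_n to the image Z of y_{n+1}. *)
Definition Xsig (R : realType) (n : nat) (Z : op R n) : 'I_n -> op R n :=
  fun k => if (k : nat) == n.-1 then Z else (fun _ _ => 0).

(* A bounded *-representation of A(Sigma^{2n+1}_q) on l^2(N^n), given by the
   images Y i = pi(y_{i+1}), Ys i = pi(y_{i+1}^* ), Z = pi(y_{n+1}),
   Zs = pi(y_{n+1}^* ): bounded operators, *-compatible (adjoints), and
   satisfying the defining relations of the quotient algebra. *)
Definition star_rep_Sigma (R : realType) (n : nat) (q : R)
    (Y Ys : 'I_n -> op R n) (Z Zs : op R n) : Prop :=
  (forall i, bounded_op (Y i) /\ bounded_op (Ys i) /\ adjoint_of (Y i) (Ys i)) /\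
  bounded_op Z /\ bounded_op Zs /\ adjoint_of Z Zs /\
  sphere_rels q (Xsig Z) (Xsig Zs) Y Ys.

Definition closed_subspace (R : realType) (n : nat) (V : set (vec R n)) : Prop :=
  (forall f, V f -> in_l2 f) /\
  V (fun _ => 0) /\
  (forall f g, V f -> V g -> V (fun m => f m + g m)) /\
  (forall (a : R[i]) f, V f -> V (fun m => a * f m)) /\
  (forall (u : nat -> vec R n) (f : vec R n), (forall j, V (u j)) -> in_l2 f ->
     fine (sqnorm (fun m => u j m - f m)) @[j --> \oo] --> (0 : R) -> V f).

Definition invariant (R : realType) (n : nat) (V : set (vec R n)) (T : op R n) : Prop :=
  forall f, V f -> V (T f).

(* irreducibility: no closed subspace other than {0} and l^2 is invariant
   under the image of the algebra (equivalently, of its generators). *)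
Definition irreducible_Sigma (R : realType) (n : nat)
    (Y Ys : 'I_n -> op R n) (Z Zs : op R n) : Prop :=
  forall V : set (vec R n), closed_subspace V ->
    (forall i, invariant V (Y i) /\ invariant V (Ys i)) ->
    invariant V Z -> invariant V Zs ->
    (forall f, V f -> f = (fun _ => 0)) \/ (forall f, in_l2 f -> V f).

Definition incr (n : nat) (k : idx n) (i : 'I_n) : idx n :=
  [ffun j => if j == i then (k j).+1 else k j].
Definition decr (n : nat) (k : idx n) (i : 'I_n) : idx n :=
  [ffun j => if j == i then (k j).-1 else k j].

Definition ksum (n : nat) (k : idx n) : nat := (\sum_(j < n) k j)%N.
Definition ksum_lt (n : nat) (k : idx n) (i : 'I_n) : nat :=
  (\sum_(j < n | (j < i)%N) k j)%N.
(* k_n, the last component (0 if n = 0) *)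
Definition klast (n : nat) (k : idx n) : nat :=
  (\sum_(j < n | (j : nat) == n.-1) k j)%N.

Definition ycoef (R : realType) (n : nat) (q : R) (i : 'I_n) (k : idx n) : R :=
  q ^+ ksum_lt k i
  * Num.sqrt (1 - q ^+ ((if (i : nat) == n.-1 then 4 else 2) * k i)%N).

(* pi(y_i)|k> = ycoef(k) |k - e_i>, written on coordinates:
   (pi(y_i) f)(m) = ycoef(m + e_i) f(m + e_i). *)
Definition piY (R : realType) (n : nat) (q : R) (i : 'I_n) : op R n :=
  fun f m => ((ycoef q i (incr m i))%:C)%C * f (incr m i).

(* the adjoint formula: pi(y_i^* )|k> = ycoef(k + e_i) |k + e_i>, i.e.
   (pi(y_i^* ) f)(m) = ycoef(m) f(m - e_i) if m_i > 0, and 0 otherwise. *)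
Definition piYs (R : realType) (n : nat) (q : R) (i : 'I_n) : op R n :=
  fun f m => if (0 < m i)%N then ((ycoef q i m)%:C)%C * f (decr m i) else 0.

(* pi(y_{n+1})|k> = lam q^{|k| + k_n} |k>  (use conj lam for the adjoint) *)
Definition piZ (R : realType) (n : nat) (q : R) (lam : R[i]) : op R n :=
  fun f m => lam * ((q ^+ (ksum m + klast m)%N)%:C)%C * f m.

From Pilot Require Import Defs.
From HB Require Import structures.
From mathcomp Require Import all_boot all_order all_algebra.
From mathcomp Require Import all_classical all_reals all_analysis.
From mathcomp Require Import complex.
From mathcomp Require Import zify ring lra.
Import Order.TTheory GRing.Theory Num.Theory.
Import numFieldNormedType.Exports.
Set Implicit Arguments.
Unset Strict Implicit.
Unset Printing Implicit Defensive.
Local Open Scope classical_set_scope.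
Local Open Scope ring_scope.
Local Open Scope complex_scope.

(* The operators are weighted shifts in the basis |k>, so each defining
   relation of A(Sigma^{2n+1}_q) is checked coefficientwise; the only non-local
   one, [y_i, y_i^*], rests on the telescoping identity
   sum_{k >= j} |ycoef_k|^2 = q^{2 W_j} - q^{2 W_n} for the weighted partial
   sums W_j of [wsum].  Irreducibility: in a closed invariant subspace
   containing a vector with a nonzero coordinate at k, lowering by the y_i
   moves that coordinate to the vacuum |0>; the powers of y_{n+1}^* y_{n+1},
   diagonal with eigenvalue 1 at |0> and at most q^2 elsewhere, converge to
   the projection onto |0>, so |0> is in the subspace; the raising operators
   y_i^* then produce every |k>, and finitely supported vectors are dense. *)

Section Indices.
Variable n : nat.
Implicit Types (m : idx n) (i j l : 'I_n).

Lemma incrE m i j : incr m i j = if j == i then (m j).+1 else m j.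
Proof. by rewrite ffunE. Qed.

Lemma decrE m i j : decr m i j = if j == i then (m j).-1 else m j.
Proof. by rewrite ffunE. Qed.

Lemma incr_same m i : incr m i i = (m i).+1.
Proof. by rewrite incrE eqxx. Qed.

Lemma incr_other m i j : j != i -> incr m i j = m j.
Proof. by rewrite incrE => /negPf ->. Qed.

Lemma incrK m i : decr (incr m i) i = m.
Proof. by apply/ffunP => j; rewrite decrE incrE; case: eqP => // ->. Qed.

Lemma decrK m i : (0 < m i)%N -> incr (decr m i) i = m.
Proof.
by move=> mi; apply/ffunP => j; rewrite incrE decrE; case: eqP => // ->; rewrite prednK.
Qed.

Lemma incr_inj i : injective (fun m => incr m i).
Proof. by move=> m1 m2 /(congr1 (fun m => decr m i)); rewrite !incrK. Qed.

Lemma incrC m i j : incr (incr m i) j = incr (incr m j) i.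
Proof. by apply/ffunP => l; rewrite !incrE; do 2 case: eqP. Qed.

Lemma incr_of_gt0 m i : (0 < m i)%N -> exists m', m = incr m' i.
Proof. by move=> mi; exists (decr m i); rewrite decrK. Qed.

Lemma sum_incr (P : pred 'I_n) (c : 'I_n -> nat) m j :
  (\sum_(l | P l) c l * incr m j l = \sum_(l | P l) c l * m l + P j * c j)%N.
Proof.
rewrite (eq_bigr (fun l => c l * m l + (l == j) * c l)%N); last first.
  by move=> l _; rewrite incrE; case: eqP => _; rewrite ?mulnS ?mul1n ?mul0n; lia.
rewrite big_split /=; congr (_ + _)%N.
rewrite big_mkcond (bigD1 j) //= eqxx big1 ?addn0; first by case: (P j).
by move=> l /negPf ->; case: (P l).
Qed.

Lemma sum_incr1 (P : pred 'I_n) m j :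
  (\sum_(l | P l) incr m j l = \sum_(l | P l) m l + P j)%N.
Proof.
have := sum_incr P (fun=> 1%N) m j.
by rewrite muln1 !(eq_bigr _ (fun l _ => mul1n _)).
Qed.

Lemma ksum_incr m j : ksum (incr m j) = (ksum m).+1.
Proof. by rewrite /ksum (sum_incr1 predT) addn1. Qed.

Lemma ksum_lt_incr m i j : ksum_lt (incr m j) i = (ksum_lt m i + (j < i))%N.
Proof. exact: (sum_incr1 (fun l : 'I_n => (l < i)%N)). Qed.

Lemma lt_neq_last j i : (j < i)%N -> (j == n.-1 :> nat) = false.
Proof. by move=> ji; apply/eqP => jn; have := ltn_ord i; lia. Qed.

Lemma last_uniq i j : i == n.-1 :> nat -> j == n.-1 :> nat -> i = j.
Proof. by move=> /eqP iN /eqP jN; apply: val_inj; rewrite /= iN jN. Qed.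

Definition idx0 : idx n := [ffun => 0%N].

Lemma idx_neq0 m : m != idx0 -> exists i, (0 < m i)%N.
Proof.
apply: contraNP => /forallNP m0; apply/eqP/ffunP => i; rewrite ffunE.
by apply/eqP; rewrite -leqn0 leqNgt; apply/negP/m0.
Qed.

Lemma idx_ind (P : idx n -> Prop) :
  P idx0 -> (forall m i, P m -> P (incr m i)) -> forall m, P m.
Proof.
move=> P0 PS m; have [N] := ubnP (ksum m); elim: N m => // N IH m.
have [/eqP -> //|/idx_neq0 [i /incr_of_gt0 [m' ->]]] := boolP (m == idx0).
by rewrite ksum_incr ltnS => /IH /PS.
Qed.

(* The last coordinate counts twice: [wsum m n = |m| + m_n] is the exponent of
   pi(y_{n+1}), and [ycoef_sq] telescopes along [wsum]. *)
Definition wt l : nat := if l == n.-1 :> nat then 2 else 1.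

Definition wsum m (j : nat) : nat := \sum_(l < n | (l < j)%N) wt l * m l.

Lemma wt_gt0 l : (0 < wt l)%N.
Proof. by rewrite /wt; case: eqP. Qed.

Lemma wt_lt l i : (l < i)%N -> wt l = 1%N.
Proof. by rewrite /wt; have := ltn_ord i; case: eqP => //; lia. Qed.

Lemma wsum_incr m j (k : nat) : wsum (incr m j) k = (wsum m k + (j < k) * wt j)%N.
Proof. exact: (sum_incr (fun l : 'I_n => (l < k)%N)). Qed.

Lemma wsum0 m : wsum m 0 = 0%N.
Proof. by rewrite /wsum big_pred0. Qed.

Lemma wsumS m i : wsum m i.+1 = (wsum m i + wt i * m i)%N.
Proof.
rewrite /wsum (bigD1 i) ?ltnSn //= addnC; congr (_ + _)%N.
by apply: eq_bigl => l; rewrite ltnS -val_eqE /=; case: ltngtP.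
Qed.

Lemma wsum_ord m i : wsum m i = ksum_lt m i.
Proof. by apply: eq_bigr => l /wt_lt ->; rewrite mul1n. Qed.

Lemma wsum_last m : wsum m n = (ksum m + klast m)%N.
Proof.
rewrite /ksum /klast [X in (_ + X)%N]big_mkcond -big_split /=.
apply: eq_big => [l|l _]; first by rewrite ltn_ord.
by rewrite /wt; case: eqP => _; lia.
Qed.

Lemma wsum_idx0 (k : nat) : wsum idx0 k = 0%N.
Proof. by rewrite /wsum big1 // => l _; rewrite ffunE muln0. Qed.

Lemma wsum_last_gt0 m : m != idx0 -> (0 < wsum m n)%N.
Proof.
case/idx_neq0 => i /decrK <-; rewrite wsum_incr ltn_ord mul1n.
by rewrite addn_gt0 wt_gt0 orbT.
Qed.

End Indices.

Arguments idx0 {n}.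

Section Coefficients.
Variables (R : realType) (n : nat) (q : R).
Hypothesis hq : 0 < q < 1.
Implicit Types (m : idx n) (i j : 'I_n).

Lemma qX_ge0 k : 0 <= q ^+ k.
Proof. by case/andP: hq => /ltW q0 _; rewrite exprn_ge0. Qed.

Lemma qX_gt0 k : 0 < q ^+ k.
Proof. by case/andP: hq => q0 _; rewrite exprn_gt0. Qed.

Lemma qX_le1 k : q ^+ k <= 1.
Proof. by case/andP: hq => /ltW q0 /ltW q1; rewrite exprn_ile1. Qed.

Lemma qX_lt1 k : (0 < k)%N -> q ^+ k < 1.
Proof. by case/andP: hq => /ltW q0 q1 k0; rewrite exprn_ilt1 // -lt0n. Qed.

Lemma ycoefE i m :
  ycoef q i m = q ^+ wsum m i * Num.sqrt (1 - q ^+ (2 * (wt i * m i))).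
Proof.
by rewrite /ycoef wsum_ord /wt; case: eqP => _; rewrite ?mulnA ?mul1n.
Qed.

Lemma ycoef_gt0 i m : (0 < m i)%N -> 0 < ycoef q i m.
Proof.
move=> mi; rewrite ycoefE mulr_gt0 ?qX_gt0 // sqrtr_gt0 subr_gt0 qX_lt1 //.
by rewrite !muln_gt0 wt_gt0 mi.
Qed.

Lemma ycoef_eq0 i m : m i = 0%N -> ycoef q i m = 0.
Proof. by move=> mi; rewrite ycoefE mi !muln0 subrr sqrtr0 mulr0. Qed.

Lemma ycoef_sq i m :
  ycoef q i m ^+ 2 = q ^+ (2 * wsum m i) - q ^+ (2 * wsum m i.+1).
Proof.
rewrite ycoefE exprMn sqr_sqrtr ?subr_ge0 ?qX_le1 // wsumS mulnDr exprD.
by rewrite -exprM mulnC; ring.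
Qed.

Lemma ycoef_sq_le1 i m : ycoef q i m ^+ 2 <= 1.
Proof.
by rewrite ycoef_sq; have := qX_le1 (2 * wsum m i); have := qX_ge0 (2 * wsum m i.+1); lra.
Qed.

Lemma ycoef_incr_other i j m :
  j != i -> ycoef q i (incr m j) = q ^+ (j < i)%N * ycoef q i m.
Proof. by move=> ji; rewrite /ycoef ksum_lt_incr incr_other 1?eq_sym // exprD; ring. Qed.

Lemma ycoef_incr_swap i j m :
  j != i -> ycoef q i (incr (incr m j) i) = q ^+ (j < i)%N * ycoef q i (incr m i).
Proof. by move=> ji; rewrite incrC ycoef_incr_other. Qed.

Lemma ycoef_tail_sum m (j : nat) : (j <= n)%N ->
  \sum_(k < n | (j <= k)%N) ycoef q k m ^+ 2
    = q ^+ (2 * wsum m j) - q ^+ (2 * wsum m n).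
Proof.
move=> jn; pose u k := q ^+ (2 * wsum m k).
rewrite (eq_bigr (fun k : 'I_n => - u k.+1 - - u k)); last first.
  by move=> k _; rewrite ycoef_sq opprK addrC.
rewrite (eq_bigl (fun k : 'I_n => xpredT k && (j <= k)%N)) //.
by rewrite -(big_geq_mkord j n xpredT (fun k => - u k.+1 - - u k)) telescope_sumr // opprK addrC.
Qed.

End Coefficients.

Section L2.
Variables (R : realType) (n : nat).
Implicit Types (f g : vec R n) (m : idx n).

Lemma sqmod_ge0 (z : R[i]) : 0 <= sqmod z.
Proof. by rewrite /sqmod addr_ge0 ?sqr_ge0. Qed.

Lemma sqmodM (a b : R[i]) : sqmod (a * b) = sqmod a * sqmod b.
Proof. by case: a => a1 a2; case: b => b1 b2; rewrite /sqmod /=; ring. Qed.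

Lemma sqmodN (z : R[i]) : sqmod (- z) = sqmod z.
Proof. by case: z => a b; rewrite /sqmod /=; ring. Qed.

Lemma sqmod_real (x : R) : sqmod x%:C = x ^+ 2.
Proof. by rewrite /sqmod /=; ring. Qed.

Lemma sqmod0 : sqmod (0 : R[i]) = 0.
Proof. by rewrite -[0]/(0%:C) sqmod_real expr0n. Qed.

Lemma sqmod_norm1 (z : R[i]) : `|z| = 1 -> sqmod z = 1.
Proof. by move=> z1; apply: complexI; rewrite add_Re2_Im2 z1 expr1n. Qed.

Lemma conjcR (x : R) : conjc x%:C = x%:C.
Proof. by rewrite /= oppr0. Qed.

Lemma conjcM (a b : R[i]) : conjc (a * b) = conjc a * conjc b.
Proof. by case: a => a1 a2; case: b => b1 b2 /=; congr (_ +i* _); ring. Qed.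

Lemma sqnorm_ge0 f : (0 <= sqnorm f)%E.
Proof. by apply: esum_ge0 => m _; rewrite lee_fin sqmod_ge0. Qed.

Lemma esum_le_subset (T : choiceType) (A B : set T) (a : T -> \bar R) :
  A `<=` B -> (\esum_(x in A) a x <= \esum_(x in B) a x)%E.
Proof.
move=> AB; apply: ereal_sup_le => _ [X [finX XA] <-].
by exists X => //; split => //; apply: subset_trans AB.
Qed.

Lemma esum_scale_le (T : choiceType) (D : set T) (c : R) (b : T -> \bar R) :
  0 <= c -> (forall x, (0 <= b x)%E) ->
  (\esum_(x in D) (c%:E * b x) <= c%:E * \esum_(x in D) b x)%E.
Proof.
move=> c0 b0; apply: ge_ereal_sup => _ [X [finX XD] <-] /=.
rewrite -ge0_mule_fsumr //; apply: lee_wpmul2l; first by rewrite lee_fin.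
by apply: ereal_sup_ubound; exists X.
Qed.

Lemma in_l2_le (c : R) f g : 0 <= c -> (sqnorm g <= c%:E * sqnorm f)%E ->
  in_l2 f -> in_l2 g /\ fine (sqnorm g) <= c * fine (sqnorm f).
Proof.
move=> c0 gf f2; have ff : sqnorm f \is a fin_num by rewrite ge0_fin_numE ?sqnorm_ge0.
rewrite -(fineK ff) -EFinM in gf.
have g2 : in_l2 g by apply: le_lt_trans gf (ltry _).
split=> //; apply: (fine_le _ _ gf) => //.
by rewrite ge0_fin_numE ?sqnorm_ge0.
Qed.

Lemma sqnorm_wshift_le (c : R) (w : idx n -> R[i]) (s : idx n -> idx n) f :
  0 <= c -> (forall m, sqmod (w m) <= c) -> set_inj [set m | w m != 0%R] s ->
  (sqnorm (fun m => (w m * f (s m))%R) <= c%:E * sqnorm f)%E.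
Proof.
move=> c0 wc sinj; pose A := [set m | w m != 0%R].
apply: (@le_trans _ _ (\esum_(m in A) (c%:E * (sqmod (f (s m)))%:E)%E)).
  rewrite /sqnorm [X in (_ <= X)%E]esum_mkcond; apply: le_esum => m _.
  rewrite sqmodM; case: ifPn => [_|/negP mA].
    by rewrite -EFinM lee_fin ler_wpM2r ?sqmod_ge0.
  have -> : w m = 0 by apply/eqP/negbNE/negP => wm; apply/mA/mem_set.
  by rewrite sqmod0 mul0r.
apply: le_trans (esum_scale_le _ c0 _) _ => [m|]; first by rewrite lee_fin sqmod_ge0.
rewrite lee_wpmul2l ?lee_fin // -(esum_image A s (fun m => (sqmod (f m))%:E)) //.
exact: esum_le_subset.
Qed.

Lemma bounded_op_wshift (c : R) (w : idx n -> R[i]) (s : idx n -> idx n) :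
  0 <= c -> (forall m, sqmod (w m) <= c) -> set_inj [set m | w m != 0%R] s ->
  bounded_op (fun f m => w m * f (s m)).
Proof. by move=> c0 wc sinj; exists c => f; apply/in_l2_le/sqnorm_wshift_le. Qed.

Lemma esum_reindex (T : choiceType) (s : T -> T) (a b : T -> \bar R) :
  injective s -> (forall x, a (s x) = b x) ->
  (forall y, (forall x, s x <> y) -> a y = 0%E) ->
  \esum_(k in [set: T]) a k = \esum_(k in [set: T]) b k.
Proof.
move=> sinj ab a0; transitivity (\esum_(k in s @` [set: T]) a k).
  rewrite [RHS]esum_mkcond; apply: eq_esum => y _; case: ifPn => // /negP ys.
  by apply: a0 => x xy; apply: ys; apply/mem_set; exists x.
by rewrite esum_image; [apply: eq_esum => x _ | move=> x y _ _ /sinj].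
Qed.

Lemma rsum_reindex (T : choiceType) (s : T -> T) (F G : T -> R) :
  injective s -> (forall x, G (s x) = F x) ->
  (forall y, (forall x, s x <> y) -> G y = 0) ->
  rsum G = rsum F.
Proof.
move=> sinj GF G0; rewrite /rsum; congr (fine _ - fine _); apply: (esum_reindex sinj).
- by move=> x; rewrite GF.
- by move=> y ys; rewrite G0 // maxxx.
- by move=> x; rewrite GF.
- by move=> y ys; rewrite G0 // oppr0 maxxx.
Qed.

Definition ket (k : idx n) : vec R n := fun m => if m == k then 1 else 0.

Lemma ket_l2 k : in_l2 (ket k).
Proof.
rewrite /in_l2 /sqnorm (eq_esum (b := fun m => if m \in [set k] then 1%E else 0%E)).
  by rewrite -esum_mkcond esum_set1 ?ltry.
move=> m _; rewrite in_set1 /ket; case: eqP => _; last by rewrite sqmod0.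
by rewrite -[1]/(1%:C) sqmod_real expr1n.
Qed.

Definition trunc f (j : nat) : vec R n :=
  fun m => if (pickle m < j)%N then f m else 0.

Lemma esum_tail_le (T : countType) (a : T -> \bar R) :
  (forall x, (0 <= a x)%E) -> \esum_(x in [set: T]) a x \is a fin_num ->
  forall e, 0 < e -> exists N, forall j, (N <= j)%N ->
    (\esum_(x in ~` [set x | (pickle x < j)%N]) a x <= e%:E)%E.
Proof.
move=> a0 + e e0; set S := \esum_(x in [set: T]) a x => afin.
have [_ [X [finX _] <-] SX] : exists2 y,
    [set \sum_(x \in A) a x | A in fsets [set: T]] y & ((fine S - e)%:E < y)%E.
  apply: ereal_sup_gt; change ((fine S - e)%:E < S)%E.
  by rewrite -[X in (_ < X)%E](fineK afin) lte_fin; lra.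
exists (\max_(x <- finmap.enum_fset (fset_set X)) pickle x).+1 => j jN.
set B := [set x | (pickle x < j)%N].
have XB : X `<=` B.
  move=> x Xx; apply: leq_trans jN; rewrite ltnS.
  by apply: (leq_bigmax_seq x) => //; rewrite in_fset_set // mem_set.
have XP : (\sum_(x \in X) a x <= \esum_(x in B) a x)%E.
  by apply: esum_ge; exists X.
have := esumID B [set: T] a (fun x _ => a0 x); rewrite !setTI -/S => SPQ.
have : (\esum_(x in B) a x + \esum_(x in ~` B) a x)%E \is a fin_num by rewrite -SPQ.
rewrite fin_numD => /andP [Pfin Qfin].
move: SPQ SX XP; rewrite -(fineK Pfin) -(fineK Qfin) -(fineK afin).
move=> /(congr1 fine) /= SPQ SX /(lt_le_trans SX); rewrite lte_fin lee_fin; lra.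
Qed.

Lemma trunc_cvg f : in_l2 f ->
  fine (sqnorm (fun m => trunc f j m - f m)) @[j --> \oo] --> (0 : R).
Proof.
move=> f2; pose a m := (sqmod (f m))%:E.
have a0 m : (0 <= a m)%E by rewrite lee_fin sqmod_ge0.
have tailE j : sqnorm (fun m => trunc f j m - f m)
    = \esum_(m in ~` [set m | (pickle m < j)%N]) a m.
  rewrite /sqnorm [RHS]esum_mkcond; apply: eq_esum => m _.
  rewrite in_setC /trunc; case: ifPn => [pm|/negbTE pm].
    by rewrite subrr sqmod0 ifF //; apply/negbTE; rewrite negbK; apply/mem_set.
  by rewrite sub0r sqmodN ifT //; apply/negP => /set_mem /=; rewrite pm.
have afin : \esum_(m in [set: idx n]) a m \is a fin_num.
  by rewrite ge0_fin_numE ?sqnorm_ge0.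
apply/cvgrPdist_le => e e0; have [N tail] := esum_tail_le a0 afin e0.
exists N => // j /= jN; rewrite sub0r normrN tailE.
have Qfin : \esum_(m in ~` [set m | (pickle m < j)%N]) a m \is a fin_num.
  by rewrite ge0_fin_numE ?esum_ge0 // (le_lt_trans (tail j jN)) ?ltry.
by rewrite ger0_norm ?fine_ge0 ?esum_ge0 // -lee_fin fineK // tail.
Qed.

Section Subspace.
Variable V : set (vec R n).
Hypothesis hV : closed_subspace V.

Lemma subspace_l2 f : V f -> in_l2 f.
Proof. by case: hV => l2V _; apply: l2V. Qed.

Lemma subspace0 : V (fun _ => 0).
Proof. by case: hV => _ []. Qed.

Lemma subspaceD f g : V f -> V g -> V (fun m => f m + g m).
Proof. by case: hV => _ [_ [VD _]]; apply: VD. Qed.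

Lemma subspaceZ (a : R[i]) f : V f -> V (fun m => a * f m).
Proof. by case: hV => _ [_ [_ [VZ _]]]; apply: VZ. Qed.

Lemma subspace_closed (u : nat -> vec R n) f : (forall j, V (u j)) -> in_l2 f ->
  fine (sqnorm (fun m => u j m - f m)) @[j --> \oo] --> (0 : R) -> V f.
Proof. by case: hV => _ [_ [_ [_ Vlim]]]; apply: Vlim. Qed.

Lemma subspace_trunc : (forall k, V (ket k)) -> forall f j, V (trunc f j).
Proof.
move=> Vket f; elim=> [|j IHj].
  by have -> : trunc f 0 = (fun _ => 0) by []; apply: subspace0.
pose d m := if pickle m == j then f m else 0.
have -> : trunc f j.+1 = fun m => trunc f j m + d m.
  apply: funext => m; rewrite /trunc /d ltnS leq_eqVlt.
  by case: eqP => [->|_] /=; rewrite ?ltnn ?add0r ?addr0.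
apply: subspaceD => //; case E: (@pickle_inv (idx n) j) => [k|].
  have pk : pickle k = j by have := @pickle_invK (idx n) j; rewrite E.
  have -> : d = fun m => f k * ket k m.
    apply: funext => m; rewrite /d /ket; case: (m =P k) => [->|mk].
      by rewrite pk eqxx mulr1.
    rewrite mulr0; case: eqP => // pm; case: mk.
    by apply: (pcan_inj (@pickleK_inv (idx n))); rewrite pm pk.
  exact: subspaceZ.
have -> : d = fun _ => 0.
  by apply: funext => m; rewrite /d; case: eqP => // pm; move: E; rewrite -pm pickleK_inv.
exact: subspace0.
Qed.

Lemma subspace_full : (forall k, V (ket k)) -> forall f, in_l2 f -> V f.
Proof.
move=> Vket f f2; apply: (subspace_closed (u := trunc f)) => //.
  by move=> j; apply: subspace_trunc.
exact: trunc_cvg.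
Qed.

End Subspace.

End L2.

Arguments ket {R n} k.
Arguments ket_l2 {R n} k.

Section Representation.
Variables (R : realType) (n : nat) (q : R) (lam : R[i]).
Hypotheses (hq : 0 < q < 1) (hlam : `|lam| = 1) (hn : (1 <= n)%N).
Implicit Types (m : idx n) (i j : 'I_n) (f g : vec R n).

Local Notation Y := (piY (n:=n) q).
Local Notation Ys := (piYs (n:=n) q).
Local Notation Z := (piZ (n:=n) q lam).
Local Notation Zs := (piZ (n:=n) q (conjc lam)).
Local Notation X := (Xsig Z).
Local Notation Xs := (Xsig Zs).
Local Notation c := (q%:C : R[i]).

Ltac push_realC := rewrite ?(rmorph0, rmorph1, rmorphM, rmorphXn, rmorphD, rmorphB, rmorphN) /=.

Lemma c_neq0 : c != 0.
Proof. by rewrite eq_complex /= eqxx andbT gt_eqF //; case/andP: hq. Qed.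

Lemma last_lt : (n.-1 < n)%N.
Proof. by case: n hn. Qed.

Lemma piZE l f m : piZ q l f m = l * (q ^+ wsum m n)%:C * f m.
Proof. by rewrite /piZ wsum_last. Qed.

Lemma piY0 i m : Y i (fun _ => 0) m = 0.
Proof. by rewrite /piY mulr0. Qed.

Lemma piYs0 i m : Ys i (fun _ => 0) m = 0.
Proof. by rewrite /piYs mulr0; case: ifP. Qed.

Lemma piZ0 l m : piZ q l (fun _ => 0) m = 0.
Proof. by rewrite /piZ mulr0. Qed.

Lemma Xsig_piZ0 l k m : Xsig (piZ q l) k (fun _ => 0) m = 0.
Proof. by rewrite /Xsig; case: ifP; rewrite ?piZ0. Qed.

Lemma Xsig_lt j i (A : op R n) : (j < i)%N -> Xsig A j = fun _ _ => 0.
Proof. by move=> ji; rewrite /Xsig (lt_neq_last ji). Qed.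

Lemma piYs_piY i f m : Ys i (Y i f) m = (ycoef q i m ^+ 2)%:C * f m.
Proof.
rewrite /piYs /piY; case: (posnP (m i)) => [mi|mi] /=.
  by rewrite (ycoef_eq0 q mi) expr0n /= mul0r.
by rewrite decrK // rmorphXn /= mulrA expr2.
Qed.

Lemma piY_piYs i f m : Y i (Ys i f) m = (ycoef q i (incr m i) ^+ 2)%:C * f m.
Proof. by rewrite /piYs /piY incr_same incrK rmorphXn /= mulrA expr2. Qed.

Lemma piZs_piZ f m : Zs (Z f) m = (q ^+ (2 * wsum m n))%:C * f m.
Proof.
have lamJ : conjc lam * lam = 1 by rewrite mulrC -sqr_normc hlam expr1n.
by rewrite !piZE mulnC exprM expr2 rmorphM /= -[RHS]mul1r -lamJ; ring.
Qed.

Lemma piZ_piZs f m : Z (Zs f) m = (q ^+ (2 * wsum m n))%:C * f m.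
Proof. by rewrite -piZs_piZ !piZE; ring. Qed.

Lemma Xs_X i f m :
  Xs i (X i f) m = if i == n.-1 :> nat then (q ^+ (2 * wsum m n))%:C * f m else 0.
Proof. by rewrite /Xsig; case: ifP; rewrite ?piZs_piZ. Qed.

Lemma sum_Xs_X f m :
  \sum_(k < n) Xs k (X k f) m = (q ^+ (2 * wsum m n))%:C * f m.
Proof.
rewrite (bigD1 (Ordinal last_lt)) //= Xs_X eqxx big1 ?addr0 // => k.
by rewrite -val_eqE /= Xs_X => /negbTE ->.
Qed.

Lemma sum_Ys_Y (j : nat) f m : (j <= n)%N ->
  \sum_(k < n | (j <= k)%N) Ys k (Y k f) m
    = (q ^+ (2 * wsum m j) - q ^+ (2 * wsum m n))%:C * f m.
Proof.
move=> jn; under eq_bigr do rewrite piYs_piY.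
by rewrite -big_distrl -rmorph_sum ycoef_tail_sum.
Qed.

Lemma rel_XX i j f m : (i < j)%N -> X i (X j f) m = c^-1 * X j (X i f) m.
Proof. by move=> ij; rewrite (Xsig_lt _ ij) /= Xsig_piZ0 mulr0. Qed.

Lemma rel_YY i j f m : (j < i)%N -> Y i (Y j f) m = c^-1 * Y j (Y i f) m.
Proof.
move=> ji; have ij : i != j by rewrite neq_ltn ji orbT.
rewrite /piY ycoef_incr_swap // ycoef_incr_swap 1?eq_sym // [incr (incr m j) i]incrC.
rewrite ji ltnNge ltnW //.
by push_realC; field; apply: c_neq0.
Qed.

Lemma rel_XY i j f m : i != j -> X i (Y j f) m = c^-1 * Y j (X i f) m.
Proof.
move=> ij; rewrite /Xsig; case: ifPn => [iN|_]; last by rewrite piY0 mulr0.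
have jN : (j == n.-1 :> nat) = false by apply: contraNF ij => jN; rewrite (last_uniq iN jN).
rewrite /piY !piZE wsum_incr ltn_ord /wt jN mul1n exprD; push_realC.
by field; apply: c_neq0.
Qed.

Lemma rel_YX_diag i f m :
  Y i (X i f) m = c ^+ 2 * X i (Y i f) m
    + (c ^+ 2 - 1) * \sum_(k < n | (k < i)%N) c ^+ (i - k) * X k (Y k f) m.
Proof.
rewrite big1 ?mulr0 ?addr0 => [|k ki]; last by rewrite (Xsig_lt _ ki) mulr0.
rewrite /Xsig; case: ifPn => [iN|_]; last by rewrite piY0 mulr0.
by rewrite /piY !piZE wsum_incr ltn_ord /wt iN exprD; push_realC; ring.
Qed.

Lemma rel_XXs_diag i f m :
  X i (Xs i f) m = Xs i (X i f) m
    + (1 - c ^+ 2) * \sum_(k < n | (k < i)%N) Xs k (X k f) m.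
Proof.
rewrite big1 ?mulr0 ?addr0 => [|k ki]; last by rewrite (Xsig_lt _ ki).
by rewrite /Xsig; case: ifP => _; rewrite ?piZ_piZs ?piZs_piZ.
Qed.

Lemma rel_YYs_diag i f m :
  Y i (Ys i f) m = Ys i (Y i f) m
    + (1 - c ^+ 2) * (c ^+ (2 * (n - i)) * Xs i (X i f) m
                      + \sum_(k < n) Xs k (X k f) m
                      + \sum_(k < n | (i < k)%N) Ys k (Y k f) m).
Proof.
rewrite piY_piYs piYs_piY sum_Xs_X Xs_X (sum_Ys_Y _ _ (ltn_ord i)) !(ycoef_sq hq).
rewrite !wsum_incr ltnn ltnSn mul0n mul1n addn0 wsumS /wt; case: ifPn => [iN|_].
  have -> : wsum m n = (wsum m i + 2 * m i)%N.
    have -> : wsum m n = wsum m i.+1 by congr wsum; move: iN (ltn_ord i) => /eqP; lia.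
    by rewrite wsumS /wt iN.
  have -> : (2 * (n - i))%N = 2%N by move: iN (ltn_ord i) => /eqP; lia.
  by rewrite !mulnDr !exprD; push_realC; ring.
by rewrite mulr0 add0r !mulnDr !exprD; push_realC; ring.
Qed.

Lemma rel_XYs_diag i f m : X i (Ys i f) m = c ^+ 2 * Ys i (X i f) m.
Proof.
rewrite /Xsig; case: ifPn => [iN|_]; last by rewrite piYs0 mulr0.
rewrite /piYs !piZE /=; case: (posnP (m i)) => [_|/incr_of_gt0 [m' ->]]; first by rewrite !mulr0.
by rewrite incrK wsum_incr ltn_ord /wt iN exprD; push_realC; ring.
Qed.

Lemma rel_XXs i j f m : i != j -> X i (Xs j f) m = c * Xs j (X i f) m.
Proof.
move=> ij; rewrite /Xsig; case: ifPn => iN; case: ifPn => jN /=; rewrite ?piZ0 ?mulr0 //.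
by rewrite (last_uniq iN jN) eqxx in ij.
Qed.

Lemma rel_YYs i j f m : i != j ->
  Y i (Ys j f) m = c * Ys j (Y i f) m
     - (c ^+ 2 - 1) * c ^+ (2 * n - i - j) * Xs i (X j f) m.
Proof.
move=> ij; have ji : j != i by rewrite eq_sym.
have -> : Xs i (X j f) m = 0.
  rewrite /Xsig; case: ifPn => // iN; case: ifPn => jN /=; last exact: piZ0.
  by rewrite (last_uniq iN jN) eqxx in ij.
rewrite mulr0 subr0 /piY /piYs incr_other //.
case: (posnP (m j)) => [_|/incr_of_gt0 [m' ->]]; first by rewrite !mulr0.
rewrite incrK (ycoef_incr_swap q m' ji) (ycoef_incr_other q (incr m' j) ij) incrC incrK.
set a := ycoef q i (incr m' i); set b := ycoef q j (incr m' j).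
case: (ltngtP i j) => [_|_|/val_inj iji]; last by rewrite iji eqxx in ij.
  by rewrite /= expr0 expr1; push_realC; ring.
by rewrite /= expr0 expr1; push_realC; ring.
Qed.

Lemma rel_XYs_lt i j f m : (i < j)%N -> X i (Ys j f) m = c * Ys j (X i f) m.
Proof. by move=> ij; rewrite (Xsig_lt _ ij) /= piYs0 mulr0. Qed.

Lemma rel_XYs_gt i j f m : (j < i)%N ->
  X i (Ys j f) m = c * Ys j (X i f) m + (c ^+ 2 - 1) * c ^+ (i - j) * Ys i (X j f) m.
Proof.
move=> ji; rewrite [X j](Xsig_lt _ ji) /= piYs0 mulr0 addr0.
rewrite /Xsig; case: ifPn => [iN|_]; last by rewrite piYs0 mulr0.
rewrite /piYs !piZE /=; case: (posnP (m j)) => [_|/incr_of_gt0 [m' ->]]; first by rewrite !mulr0.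
by rewrite incrK wsum_incr ltn_ord /wt (lt_neq_last ji) mul1n exprD; push_realC; ring.
Qed.

Lemma rel_sum f m : \sum_(i < n) (Xs i (X i f) m + Ys i (Y i f) m) = f m.
Proof.
rewrite big_split /= sum_Xs_X.
rewrite (eq_bigl (fun k : 'I_n => (0 <= k)%N)) // sum_Ys_Y // wsum0.
by push_realC; ring.
Qed.

Lemma piY_sphere_rels : sphere_rels q X Xs Y Ys.
Proof.
rewrite /sphere_rels; repeat match goal with |- _ /\ _ => split end.
- by move=> i j ij f _; apply: funext => m; apply: rel_XX.
- by move=> i j ji f _; apply: funext => m; apply: rel_YY.
- by move=> i j ij f _; apply: funext => m; apply: rel_XY.
- by move=> i f _; apply: funext => m; apply: rel_YX_diag.
- by move=> i f _; apply: funext => m; apply: rel_XXs_diag.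
- by move=> i f _; apply: funext => m; apply: rel_YYs_diag.
- by move=> i f _; apply: funext => m; apply: rel_XYs_diag.
- by move=> i j ij f _; apply: funext => m; apply: rel_XXs.
- by move=> i j ij f _; apply: funext => m; apply: rel_YYs.
- by move=> i j ij f _; apply: funext => m; apply: rel_XYs_lt.
- by move=> i j ji f _; apply: funext => m; apply: rel_XYs_gt.
- by move=> f _; apply: funext => m; apply: rel_sum.
Qed.

Lemma sqmod_ycoef_le1 i m : sqmod (ycoef q i m)%:C <= 1.
Proof. by rewrite sqmod_real (ycoef_sq_le1 hq). Qed.

Lemma piY_bounded i : bounded_op (Y i).
Proof.
apply: (bounded_op_wshift (w := fun m => (ycoef q i (incr m i))%:C) ler01).
  by move=> m; apply: sqmod_ycoef_le1.
by move=> m1 m2 _ _; apply: incr_inj.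
Qed.

Lemma piYs_bounded i : bounded_op (Ys i).
Proof.
pose w m : R[i] := if (0 < m i)%N then (ycoef q i m)%:C else 0.
have -> : Ys i = fun f m => w m * f (decr m i).
  by apply: funext => f; apply: funext => m; rewrite /piYs /w; case: ifP; rewrite ?mul0r.
apply: bounded_op_wshift ler01 _ _ => [m|m1 m2].
  by rewrite /w; case: ifP => _; rewrite ?sqmod_ycoef_le1 // sqmod0 ler01.
move=> /set_mem /= + /set_mem /=; rewrite /w; case: ifP => [m1i _|_]; last by rewrite eqxx.
case: ifP => [m2i _ e|_]; last by rewrite eqxx.
by rewrite -(decrK m1i) -(decrK m2i) e.
Qed.

Lemma piZ_bounded l : `|l| = 1 -> bounded_op (piZ (n:=n) q l).
Proof.
move=> l1; have -> : piZ q l = fun f m => l * (q ^+ wsum m n)%:C * f (id m).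
  by apply: funext => f; apply: funext => m; rewrite piZE.
apply: bounded_op_wshift ler01 _ _ => [m|m1 m2 _ _ //].
by rewrite sqmodM sqmod_norm1 // mul1r sqmod_real -exprM (qX_le1 hq).
Qed.

Lemma piY_adjoint i : adjoint_of (Y i) (Ys i).
Proof.
move=> f g _ _.
have GF x : conjc (f (incr x i)) * Ys i g (incr x i) = conjc (Y i f x) * g x.
  by rewrite /piYs /piY incr_same ltn0Sn incrK conjcM conjcR; ring.
have G0 y : (forall x, incr x i <> y) -> conjc (f y) * Ys i g y = 0.
  move=> ny; rewrite /piYs; case: ifPn => [yi|_]; last by rewrite mulr0.
  by case: (ny (decr y i)); rewrite decrK.
rewrite /cdot; congr (_ +i* _); symmetry;
  by apply: (rsum_reindex (s := fun m => incr m i) (@incr_inj _ i)) => [x|y /G0 ->]; rewrite ?GF.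
Qed.

Lemma piZ_adjoint : adjoint_of Z Zs.
Proof.
move=> f g _ _; have ZZs m : conjc (Z f m) * g m = conjc (f m) * Zs g m.
  by rewrite !piZE !conjcM conjcR; ring.
by rewrite /cdot; congr (_ +i* _); congr rsum; apply: funext => m; rewrite ZZs.
Qed.

Lemma piY_star_rep : star_rep_Sigma q Y Ys Z Zs.
Proof.
split.
  by move=> i; split; [apply: piY_bounded | split; [apply: piYs_bounded | apply: piY_adjoint]].
split; first exact: piZ_bounded.
split; first by apply: piZ_bounded; rewrite normcJ.
by split; [apply: piZ_adjoint | apply: piY_sphere_rels].
Qed.

Lemma piYs_ket i k : Ys i (ket k) = fun m => (ycoef q i (incr k i))%:C * ket (incr k i) m.
Proof.
apply: funext => m; rewrite /piYs /ket; case: (posnP (m i)) => [mi|/incr_of_gt0 [m' ->]].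
  by case: eqP => [mk|_]; [move: mi; rewrite mk incr_same | rewrite mulr0].
by rewrite incrK (inj_eq (@incr_inj _ i)); case: eqP => [->|_]; rewrite ?mulr0 ?mulr1.
Qed.

Lemma iter_piZs_piZ N (h : vec R n) m :
  iter N (fun f => Zs (Z f)) h m = ((q ^+ (2 * wsum m n)) ^+ N)%:C * h m.
Proof.
elim: N => [|N IH] /=; first by rewrite expr0 mul1r.
by rewrite piZs_piZ IH exprS rmorphM mulrA.
Qed.

Lemma iter_piZs_piZ_ket_le N (h : vec R n) : h idx0 = 1 -> in_l2 h ->
  fine (sqnorm (fun m => iter N (fun f => Zs (Z f)) h m - ket idx0 m))
    <= (q ^+ 2) ^+ N * fine (sqnorm h).
Proof.
move=> h0 h2; pose w m : R[i] := if m == idx0 then 0 else ((q ^+ (2 * wsum m n)) ^+ N)%:C.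
have -> : (fun m => iter N (fun f => Zs (Z f)) h m - ket idx0 m) = fun m => w m * h (id m).
  apply: funext => m; rewrite iter_piZs_piZ /w /ket; case: eqP => [->|_]; last by rewrite subr0.
  by rewrite wsum_idx0 muln0 expr0 expr1n rmorph1 mul1r h0 subrr mul0r.
apply: (in_l2_le _ (sqnorm_wshift_le _ _ _ _) h2).2 => [||m|m1 m2 //].
- by rewrite exprn_ge0 ?qX_ge0.
- by rewrite exprn_ge0 ?qX_ge0.
rewrite /w; case: eqP => [_|/eqP m0]; first by rewrite sqmod0 exprn_ge0 ?qX_ge0.
rewrite sqmod_real; set a := (q ^+ (2 * wsum m n)) ^+ N.
have a0 : 0 <= a by rewrite exprn_ge0 ?qX_ge0.
have a1 : a <= 1 by rewrite exprn_ile1 ?qX_ge0 ?qX_le1.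
have aq : a <= (q ^+ 2) ^+ N.
  rewrite lerXn2r ?nnegrE ?qX_ge0 //; case/andP: hq => /ltW q0 /ltW q1.
  by rewrite ler_wiXn2l //; have := wsum_last_gt0 m0; lia.
nra.
Qed.

Lemma iter_piZs_piZ_cvg (h : vec R n) : h idx0 = 1 -> in_l2 h ->
  fine (sqnorm (fun m => iter N (fun f => Zs (Z f)) h m - ket idx0 m)) @[N --> \oo]
    --> (0 : R).
Proof.
move=> h0 h2; apply: (@squeeze_cvgr _ _ _ _ (fun=> 0) (fun N => (q ^+ 2) ^+ N * fine (sqnorm h))).
- by apply: nearW => N; rewrite fine_ge0 ?sqnorm_ge0 ?iter_piZs_piZ_ket_le.
- exact: cvg_cst.
- rewrite -(mul0r (fine (sqnorm h))); apply: cvgM; last exact: cvg_cst.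
  by apply: cvg_expr; rewrite ger0_norm ?qX_ge0 ?qX_lt1.
Qed.

Section Irreducible.
Variable V : set (vec R n).
Hypothesis hV : closed_subspace V.

Lemma subspace_vacuum_coord : (forall i, Defs.invariant V (Y i)) ->
  forall k f, V f -> f k != 0 -> exists g, V g /\ g idx0 != 0.
Proof.
move=> VY; elim/idx_ind => [|k i IH] f Vf fk; first by exists f.
apply: (IH _ (VY i _ Vf)); rewrite /piY mulf_neq0 // fmorph_eq0 gt_eqF //.
by rewrite ycoef_gt0 // incr_same.
Qed.

Lemma subspace_ket0 : Defs.invariant V Z -> Defs.invariant V Zs ->
  forall g, V g -> g idx0 != 0 -> V (ket idx0).
Proof.
move=> VZ VZs g Vg g0; pose h m := (g idx0)^-1 * g m.
have Vh : V h by apply: subspaceZ.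
apply: (subspace_closed hV (u := fun N => iter N (fun f => Zs (Z f)) h) _ (ket_l2 idx0)).
  by elim=> //= N IH; apply/VZs/VZ.
by apply: iter_piZs_piZ_cvg (subspace_l2 hV Vh); rewrite /h mulVf.
Qed.

Lemma subspace_kets : (forall i, Defs.invariant V (Ys i)) -> V (ket idx0) -> forall k, V (ket k).
Proof.
move=> VYs V0; elim/idx_ind => // k i Vk.
have := subspaceZ hV (ycoef q i (incr k i))%:C^-1 (VYs i _ Vk); rewrite piYs_ket.
congr V; apply: funext => m; rewrite mulrA mulVf ?mul1r // fmorph_eq0 gt_eqF //.
by rewrite ycoef_gt0 // incr_same.
Qed.

End Irreducible.

Lemma piY_irreducible : irreducible_Sigma Y Ys Z Zs.
Proof.
move=> V hV VY VZ VZs.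
have [[f [Vf f0]]|nf] := pselect (exists f, V f /\ f <> (fun _ => 0)); last first.
  by left => f Vf; apply: contra_notP nf => f0; exists f.
have [k fk] : exists k, f k != 0.
  by apply: contra_notP f0 => /forallNP nf; apply: funext => m; apply/eqP/negbNE/negP/nf.
have [g [Vg g0]] := subspace_vacuum_coord (fun i => (VY i).1) Vf fk.
right; apply: (subspace_full hV) => k'.
exact: subspace_kets hV (fun i => (VY i).2) (subspace_ket0 hV VZ VZs Vg g0) k'.
Qed.

End Representation.

Theorem proposition1p2 (R : realType) (n : nat) (q : R) (lam : R[i]) :
  (1 <= n)%N -> 0 < q < 1 -> `|lam| = 1 ->
  star_rep_Sigma q (piY (n:=n) q) (piYs q) (piZ q lam) (piZ q (conjc lam)) /\
  irreducible_Sigma (piY (n:=n) q) (piYs q) (piZ q lam) (piZ q (conjc lam)).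
Proof. by move=> hn hq hlam; split; [apply: piY_star_rep | apply: piY_irreducible]. Qed.
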